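(* Let $Q$ be a groupoid quantale with base locale $A$ and let $X$ be a stably supported $Q$-module with support $\varsigma_X$ and inner product $\langle-,-\rangle$. Then for all $x\in X$ and $q\in Q$, $$\varsigma_X(x)\triangleright q=\langle x,x\rangle1_Q\wedge q.$$
   Context: Let $A$ be a locale. An involutive $A$-$A$-quantale $Q$ is a sup-lattice with unital left and right $A$-actions $a\triangleright q$, $q\triangleleft a$ commuting with each other, an associative join-preserving multiplication with $(a\triangleright x)y=a\triangleright(xy)$, $(x\triangleleft a)y=x(a\triangleright y)$, $(xy)\triangleleft a=x(y\triangleleft a)$, and a join-preserving involution with $x^{**}=x$, $(xy)^*=y^*x^*$, $(a\triangleright x\triangleleft b)^*=b\triangleright x^*\triangleleft a$. A support is a sup-lattice homomorphism $\varsigma_Q:Q\to A$ with $\varsigma_Q(1_Q)=1_A$, $\varsigma_Q(x)\triangleright y\le xx^*y$, $\varsigma_Q(x)\triangleright x=x$; equivariant if $\varsigma_Q(a\triangleright x)=a\wedge\varsigma_Q(x)$. A groupoid quantale is such a $Q$ which is a frame with $(a\triangleright q)\wedge m=a\triangleright(q\wedge m)$, $m\wedge(q\triangleleft a)=(q\wedge m)\triangleleft a$, equipped with an equivariant support and a frame homomorphism $\upsilon:Q\to A$ with $\upsilon(a\triangleright1_Q)=a=\upsilon(1_Q\triangleleft a)$, such that the right adjoint of the multiplication $Q\otimes_AQ\to Q$ preserves joins, and satisfying $\bigvee_{xy\le a}\upsilon(x)\triangleright y=a$ and $\upsilon(a)\triangleright1_Q=\bigvee_{xx^*\le a}x$.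 A $Q$-module is a locale $X$ with a left $Q$-module action $q\cdot x$ and unital left $A$-module structure $a\triangleright x$ with $(a\triangleright q)\cdot x=a\triangleright(q\cdot x)$, $(q\triangleleft a)\cdot x=q\cdot(a\triangleright x)$, $a\triangleright(x\wedge y)=(a\triangleright x)\wedge y$. A pre-Hilbert $Q$-module has $\langle-,-\rangle:X\times X\to Q$ with $\langle q\cdot x,y\rangle=q\langle x,y\rangle$, $a\triangleright\langle x,1_X\rangle=\langle a\triangleright x,1_X\rangle$, $\langle\bigvee x_\alpha,y\rangle=\bigvee\langle x_\alpha,y\rangle$, $\langle x,y\rangle=\langle y,x\rangle^*$. It is supported if equipped with a monotone $\varsigma_X:X\to A$ with $\varsigma_X(1_X)=1_A$, $\varsigma_X(x)\triangleright1_X\le\langle x,x\rangle\cdot1_X$, $\varsigma_X(x)\triangleright x=x$; stably supported if moreover $\varsigma_X(q\cdot x)\le\varsigma_Q(q)$. *)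

Record SupLattice := {
  sl_car :> Type;
  sl_le : sl_car -> sl_car -> Prop;
  sl_sup : (sl_car -> Prop) -> sl_car;
  sl_le_refl : forall x, sl_le x x;
  sl_le_trans : forall x y z, sl_le x y -> sl_le y z -> sl_le x z;
  sl_le_antisym : forall x y, sl_le x y -> sl_le y x -> x = y;
  sl_sup_ub : forall S x, S x -> sl_le x (sl_sup S);
  sl_sup_least : forall S y, (forall x, S x -> sl_le x y) -> sl_le (sl_sup S) y
}.

Arguments sl_le {s} _ _.
Arguments sl_sup {s} _.

Definition img {T U : Type} (f : T -> U) (S : T -> Prop) : U -> Prop :=
  fun y => exists x, S x /\ y = f x.

Definition top {L : SupLattice} : L := sl_sup (fun _ => True).

Definition meet {L : SupLattice} (x y : L) : L :=
  sl_sup (fun z => sl_le z x /\ sl_le z y).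

Definition join_pres {L M : SupLattice} (f : L -> M) : Prop :=
  forall S : L -> Prop, f (sl_sup S) = sl_sup (img f S).

Definition monotone {L M : SupLattice} (f : L -> M) : Prop :=
  forall x y, sl_le x y -> sl_le (f x) (f y).

Definition is_frame (L : SupLattice) : Prop :=
  forall (a : L) (S : L -> Prop), meet a (sl_sup S) = sl_sup (img (meet a) S).

Definition frame_hom {L M : SupLattice} (f : L -> M) : Prop :=
  join_pres f /\ f top = top /\ (forall x y, f (meet x y) = meet (f x) (f y)).

Record Locale := {
  loc :> SupLattice;
  loc_frame : is_frame loc
}.

(** The locale A acts as a unital quantale with multiplication [meet] and
    unit [top]; "unital left/right A-action" means a module structure over
    it: join preserving in each variable, associative and unital. *)

Record AAQuantale (A : Locale) := {
  aq :> SupLattice;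
  lact : A -> aq -> aq;
  ract : aq -> A -> aq;
  mul : aq -> aq -> aq;
  inv : aq -> aq;
  lact_join_l : forall (S : A -> Prop) q, lact (sl_sup S) q = sl_sup (img (fun a => lact a q) S);
  lact_join_r : forall a (S : aq -> Prop), lact a (sl_sup S) = sl_sup (img (lact a) S);
  lact_assoc : forall a b q, lact (meet a b) q = lact a (lact b q);
  lact_unit : forall q, lact top q = q;
  ract_join_l : forall (S : aq -> Prop) a, ract (sl_sup S) a = sl_sup (img (fun q => ract q a) S);
  ract_join_r : forall q (S : A -> Prop), ract q (sl_sup S) = sl_sup (img (ract q) S);
  ract_assoc : forall q a b, ract q (meet a b) = ract (ract q a) b;
  ract_unit : forall q, ract q top = q;
  lact_ract : forall a q b, ract (lact a q) b = lact a (ract q b);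
  mul_assoc : forall x y z, mul (mul x y) z = mul x (mul y z);
  mul_join_l : forall (S : aq -> Prop) y, mul (sl_sup S) y = sl_sup (img (fun x => mul x y) S);
  mul_join_r : forall x (S : aq -> Prop), mul x (sl_sup S) = sl_sup (img (mul x) S);
  mul_lact : forall a x y, mul (lact a x) y = lact a (mul x y);
  mul_ract_lact : forall x a y, mul (ract x a) y = mul x (lact a y);
  mul_ract : forall x y a, ract (mul x y) a = mul x (ract y a);
  inv_join : join_pres inv;
  inv_inv : forall x, inv (inv x) = x;
  inv_mul : forall x y, inv (mul x y) = mul (inv y) (inv x);
  inv_act : forall a x b, inv (ract (lact a x) b) = ract (lact b (inv x)) a
}.

Arguments lact {A} _ _ _.
Arguments ract {A} _ _ _.
Arguments mul {A} _ _ _.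
Arguments inv {A} _ _.

Definition is_support {A : Locale} (Q : AAQuantale A) (s : Q -> A) : Prop :=
  join_pres s /\ s top = top /\
  (forall x y : Q, sl_le (lact Q (s x) y) (mul Q (mul Q x (inv Q x)) y)) /\
  (forall x : Q, lact Q (s x) x = x).

Definition equivariant_support {A : Locale} (Q : AAQuantale A) (s : Q -> A) : Prop :=
  is_support Q s /\ forall (a : A) (x : Q), s (lact Q a x) = meet a (s x).

(** * The tensor product Q (x)_A Q, presented (Joyal--Tierney) as the
    sup-lattice of A-balanced bilinear downsets of Q x Q ("tensor ideals"),
    ordered by inclusion.  The join of a family of ideals is the least ideal
    containing all of them.  The multiplication Q (x)_A Q -> Q sends an
    ideal D to the join of {x y | D x y}; its right adjoint sends q to the
    ideal [mu_star q] = {(x,y) | x y <= q}. *)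

Definition tensor_ideal {A : Locale} (Q : AAQuantale A) (D : Q -> Q -> Prop) : Prop :=
  (forall x y x' y', D x y -> sl_le x' x -> sl_le y' y -> D x' y') /\
  (forall (X : Q -> Prop) y, (forall x, X x -> D x y) -> D (sl_sup X) y) /\
  (forall x (Y : Q -> Prop), (forall y, Y y -> D x y) -> D x (sl_sup Y)) /\
  (forall x a y, D (ract Q x a) y <-> D x (lact Q a y)).

Definition tensor_join {A : Locale} (Q : AAQuantale A) (T : Q -> Prop)
    (F : Q -> Q -> Q -> Prop) : Q -> Q -> Prop :=
  fun x y => forall D, tensor_ideal Q D ->
    (forall t x' y', T t -> F t x' y' -> D x' y') -> D x y.

Definition mu_star {A : Locale} (Q : AAQuantale A) (q : Q) : Q -> Q -> Prop :=
  fun x y => sl_le (mul Q x y) q.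

(** "the right adjoint of the multiplication preserves joins":
    mu_star (\/ T) = \/_{t in T} mu_star t in Q (x)_A Q.
    (The inclusion from right to left holds by monotonicity; we state the
    equality of ideals as mutual inclusion.) *)
Definition mu_star_join_pres {A : Locale} (Q : AAQuantale A) : Prop :=
  forall (T : Q -> Prop) (x y : Q),
    mu_star Q (sl_sup T) x y <-> tensor_join Q T (mu_star Q) x y.

Record GroupoidQuantale (A : Locale) := {
  gq :> AAQuantale A;
  gq_frame : is_frame gq;
  gq_lact_meet : forall (a : A) (q m : gq), meet (lact gq a q) m = lact gq a (meet q m);
  gq_ract_meet : forall (a : A) (q m : gq), meet m (ract gq q a) = ract gq (meet q m) a;
  gq_supp : gq -> A;
  gq_supp_equiv : equivariant_support gq gq_supp;
  gq_ups : gq -> A;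
  gq_ups_frame : frame_hom gq_ups;
  gq_ups_l : forall a : A, gq_ups (lact gq a top) = a;
  gq_ups_r : forall a : A, gq_ups (ract gq top a) = a;
  gq_mu_star : mu_star_join_pres gq;
  gq_unit_law : forall a : gq,
    sl_sup (fun z => exists x y : gq, sl_le (mul gq x y) a /\ z = lact gq (gq_ups x) y) = a;
  gq_ups_law : forall a : gq,
    lact gq (gq_ups a) top = sl_sup (fun x => sl_le (mul gq x (inv gq x)) a)
}.

Arguments gq_supp {A} _ _.

Record QModule (A : Locale) (Q : GroupoidQuantale A) := {
  qm :> SupLattice;
  qm_frame : is_frame qm;
  qact : Q -> qm -> qm;
  aact : A -> qm -> qm;
  qact_join_l : forall (S : Q -> Prop) x, qact (sl_sup S) x = sl_sup (img (fun q => qact q x) S);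
  qact_join_r : forall q (S : qm -> Prop), qact q (sl_sup S) = sl_sup (img (qact q) S);
  qact_assoc : forall p q x, qact (mul Q p q) x = qact p (qact q x);
  aact_join_l : forall (S : A -> Prop) x, aact (sl_sup S) x = sl_sup (img (fun a => aact a x) S);
  aact_join_r : forall a (S : qm -> Prop), aact a (sl_sup S) = sl_sup (img (aact a) S);
  aact_assoc : forall a b x, aact (meet a b) x = aact a (aact b x);
  aact_unit : forall x, aact top x = x;
  qm_compat_l : forall a q x, qact (lact Q a q) x = aact a (qact q x);
  qm_compat_r : forall q a x, qact (ract Q q a) x = qact q (aact a x);
  qm_compat_meet : forall a x y, aact a (meet x y) = meet (aact a x) y
}.

Arguments qact {A Q} _ _ _.
Arguments aact {A Q} _ _ _.

Record StablySupportedModule (A : Locale) (Q : GroupoidQuantale A) := {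
  ssm :> QModule A Q;
  ip : ssm -> ssm -> Q;
  ip_qact : forall q x y, ip (qact ssm q x) y = mul Q q (ip x y);
  ip_aact : forall a x, lact Q a (ip x top) = ip (aact ssm a x) top;
  ip_join : forall (S : ssm -> Prop) y, ip (sl_sup S) y = sl_sup (img (fun x => ip x y) S);
  ip_sym : forall x y, ip x y = inv Q (ip y x);
  supp : ssm -> A;
  supp_mono : monotone supp;
  supp_top : supp top = top;
  supp_le : forall x, sl_le (aact ssm (supp x) top) (qact ssm (ip x x) top);
  supp_fix : forall x, aact ssm (supp x) x = x;
  supp_stable : forall q x, sl_le (supp (qact ssm q x)) (gq_supp Q q)
}.

Arguments ip {A Q} _ _ _.
Arguments supp {A Q} _ _.


(* Both sides are [a |> q] for [a = supp x]: one shows [<x,x> 1_Q = supp x |> 1_Q], and in a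
   groupoid quantale [(a |> 1_Q) /\ q = a |> (1_Q /\ q) = a |> q].  The inequality
   [<x,x> 1_Q <= supp x |> 1_Q] comes from [x = supp x |> x] and the A-linearity of the inner
   product; the converse from [x <= supp x |> 1_X <= <x,x> 1_X], which by stability gives
   [supp x <= supp_Q <x,x>], and [supp_Q p |> 1_Q <= p p^* 1_Q <= p 1_Q]. *)

Lemma sl_le_top (L : SupLattice) (x : L) : sl_le x top.
Proof. apply sl_sup_ub; exact I. Qed.

Lemma meet_topl (L : SupLattice) (x : L) : meet top x = x.
Proof.
  apply sl_le_antisym.
  - apply sl_sup_least; intros z [_ Hzx]; exact Hzx.
  - apply sl_sup_ub; split; [apply sl_le_top | apply sl_le_refl].
Qed.

Lemma join_pres_monotone (L M : SupLattice) (f : L -> M) : join_pres f -> monotone f.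
Proof.
  intros Hf x y Hxy.
  assert (Hjoin : sl_sup (fun z => z = x \/ z = y) = y).
  { apply sl_le_antisym.
    - apply sl_sup_least; intros z [-> | ->]; [exact Hxy | apply sl_le_refl].
    - apply sl_sup_ub; right; reflexivity. }
  rewrite <- Hjoin, Hf.
  apply sl_sup_ub; exists x; split; [left |]; reflexivity.
Qed.

Section AAQuantaleTheory.

Variables (A : Locale) (Q : AAQuantale A).

Lemma lact_monol (p : Q) : monotone (fun a : A => lact Q a p).
Proof. apply join_pres_monotone; intro S; apply lact_join_l. Qed.

Lemma lact_monor (a : A) : monotone (lact Q a).
Proof. apply join_pres_monotone; intro S; apply lact_join_r. Qed.

Lemma mul_monol (p : Q) : monotone (fun r : Q => mul Q r p).
Proof. apply join_pres_monotone; intro S; apply mul_join_l. Qed.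

Lemma mul_monor (p : Q) : monotone (mul Q p).
Proof. apply join_pres_monotone; intro S; apply mul_join_r. Qed.

Lemma mul_lact_top_le (a : A) (p : Q) : sl_le (mul Q (lact Q a top) p) (lact Q a top).
Proof. rewrite mul_lact; apply lact_monor, sl_le_top. Qed.

Lemma support_lact_top_le (s : Q -> A) (p : Q) :
  is_support Q s -> sl_le (lact Q (s p) top) (mul Q p top).
Proof.
  intros [_ [_ [Hs _]]].
  eapply sl_le_trans; [apply Hs |].
  rewrite mul_assoc; apply mul_monor, sl_le_top.
Qed.

End AAQuantaleTheory.

Lemma lact_top_meet (A : Locale) (Q : GroupoidQuantale A) (a : A) (q : Q) :
  meet (lact Q a top) q = lact Q a q.
Proof. rewrite gq_lact_meet, meet_topl; reflexivity. Qed.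

Section StablySupportedModuleTheory.

Variables (A : Locale) (Q : GroupoidQuantale A) (X : StablySupportedModule A Q).

Lemma ip_monol (y : X) : monotone (fun x : X => ip X x y).
Proof. apply join_pres_monotone; intro S; apply ip_join. Qed.

Lemma ip_monor (x : X) : monotone (ip X x).
Proof.
  intros y y' Hyy'; rewrite (ip_sym _ _ X x y), (ip_sym _ _ X x y').
  apply (join_pres_monotone _ _ _ (inv_join _ Q)), ip_monol, Hyy'.
Qed.

Lemma aact_monor (a : A) : monotone (aact X a).
Proof. apply join_pres_monotone; intro S; apply aact_join_r. Qed.

Lemma ip_self_le_lact_supp (x : X) : sl_le (ip X x x) (lact Q (supp X x) top).
Proof.
  apply sl_le_trans with (ip X (aact X (supp X x) x) top).
  - rewrite supp_fix; apply ip_monor, sl_le_top.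
  - rewrite <- ip_aact; apply lact_monor, sl_le_top.
Qed.

Lemma supp_le_supp_ip (x : X) : sl_le (supp X x) (gq_supp Q (ip X x x)).
Proof.
  eapply sl_le_trans; [apply supp_mono | apply supp_stable].
  eapply sl_le_trans; [| apply supp_le].
  apply sl_le_trans with (aact X (supp X x) x).
  - rewrite supp_fix; apply sl_le_refl.
  - apply aact_monor, sl_le_top.
Qed.

Lemma ip_self_top (x : X) : mul Q (ip X x x) top = lact Q (supp X x) top.
Proof.
  apply sl_le_antisym.
  - eapply sl_le_trans; [apply mul_monol, ip_self_le_lact_supp | apply mul_lact_top_le].
  - eapply sl_le_trans; [apply lact_monol, supp_le_supp_ip |].
    apply support_lact_top_le, (proj1 (gq_supp_equiv _ Q)).
Qed.

End StablySupportedModuleTheory.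

Theorem corollary4p2 (A : Locale) (Q : GroupoidQuantale A)
  (X : StablySupportedModule A Q) (x : X) (q : Q) :
  lact Q (supp X x) q = meet (mul Q (ip X x x) top) q.
Proof. rewrite ip_self_top, lact_top_meet; reflexivity. Qed.
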